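(* Let $X$ be an integral regular projective curve of genus $g$ over $\mathbb{F}_q$ and $\mathbf{n}_m=(n_0,\dots,n_m)$ ($m\ge0$) a tuple of positive integers. Then $$\operatorname{Res}_{T_{\mathbf{n}_m}=1}\widehat Z^{(\mathbf{n}_m)}_X(T_{\mathbf{n}_m})=q_{\mathbf{n}_{m-1}}^{\binom{n_m}{2}(g-1)}\sum_{\substack{d_1,\dots,d_k>0\\d_1+\cdots+d_k=n_m}}\frac{\widehat v_{d_1}\cdots\widehat v_{d_k}}{\prod_{j=1}^{k-1}(1-q_{\mathbf{n}_{m-1}}^{d_j+d_{j+1}})}.$$
   Context: Let $\zeta_X(s)=\sum_{D\ge 0}N(D)^{-s}$ be the Artin zeta function of $X$ ($D$ running over effective divisors) and $\widehat\zeta_X(s)=q^{s(g-1)}\zeta_X(s)$ the complete Artin zeta function, a rational function of $q^{-s}$. Derived zeta functions are defined recursively. For the empty tuple $\mathbf{n}_{-1}=()$ put $q_{\mathbf{n}_{-1}}=q$, $T_{\mathbf{n}_{-1}}=q^{-s}$, $\widehat\zeta^{(\mathbf{n}_{-1})}_X=\widehat\zeta_X$. For a tuple $\mathbf{n}_m=(n_0,\dots,n_m)$ of positive integers ($m\ge 0$) put $\mathbf{n}_{m-1}=(n_0,\dots,n_{m-1})$, $q_{\mathbf{n}_m}=q^{n_0n_1\cdots n_m}$, $T_{\mathbf{n}_m}=q^{-n_0n_1\cdots n_m s}$. Writing $\widehat Z^{(\mathbf{n}_{m-1})}_X(T_{\mathbf{n}_{m-1}}):=\widehat\zeta^{(\mathbf{n}_{m-1})}_X(s)$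 (a rational function of $T_{\mathbf{n}_{m-1}}$), set $\widehat\zeta^{(\mathbf{n}_{m-1})}_X(1):=\operatorname{Res}_{T_{\mathbf{n}_{m-1}}=1}\widehat Z^{(\mathbf{n}_{m-1})}_X(T_{\mathbf{n}_{m-1}})$ and for integers $N\ge 1$, $\widehat v_N:=\prod_{k=1}^{N}\widehat\zeta^{(\mathbf{n}_{m-1})}_X(k)$. Then $$\widehat\zeta^{(\mathbf{n}_m)}_X(s)=q_{\mathbf{n}_{m-1}}^{\binom{n_m}{2}(g-1)}\sum_{a=1}^{n_m}\Biggl(\sum_{\substack{k_1,\dots,k_p>0\\k_1+\cdots+k_p=n_m-a}}\frac{\widehat v_{k_1}\cdots\widehat v_{k_p}}{\prod_{j=1}^{p-1}(1-q_{\mathbf{n}_{m-1}}^{k_j+k_{j+1}})}\cdot\frac{1}{1-q_{\mathbf{n}_{m-1}}^{n_ms-n_m+a+k_p}}\Biggr)\widehat\zeta^{(\mathbf{n}_{m-1})}_X(n_ms-n_m+a)\Biggl(\sum_{\substack{l_1,\dots,l_r>0\\l_1+\cdots+l_r=a-1}}\frac{1}{1-q_{\mathbf{n}_{m-1}}^{-n_ms+n_m-a+1+l_1}}\cdot\frac{\widehat v_{l_1}\cdots\widehat v_{l_r}}{\prod_{j=1}^{r-1}(1-q_{\mathbf{n}_{m-1}}^{l_j+l_{j+1}})}\Biggr),$$ where the inner sums run over ordered tuples of positive integers (of any length) with the indicated sum, and an inner sum over tuples summing to $0$ is defined to be $1$. One writes $\widehat Z^{(\mathbf{n}_m)}_X(T_{\mathbf{n}_m}):=\widehat\zeta^{(\mathbf{n}_m)}_X(s)$,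 a rational function of $T_{\mathbf{n}_m}$. (For $m=0$ this is the $\mathrm{SL}_{n_0}$-zeta function of $X$, which coincides with the rank $n_0$ non-abelian zeta function of $X$.) *)

From HB Require Import structures.
From mathcomp Require Import all_boot all_order all_algebra.
From Stdlib Require Import ClassicalEpsilon.
Set Implicit Arguments. Unset Strict Implicit. Unset Printing Implicit Defensive.
Import Order.TTheory GRing.Theory Num.Theory.
Local Open Scope ring_scope.

(* Ordered tuples of positive integers (compositions) summing to k.
   The fuel argument is >= the number of parts, so compositions k is complete. *)
Fixpoint comps_fuel (fuel k : nat) : seq (seq nat) :=
  if k is 0 then [:: [::]] else
  if fuel is fuel'.+1 then
    flatten [seq [seq d :: c | c <- comps_fuel fuel' (k - d)%N] | d <- iota 1 k]
  else [::].
Definition compositions (k : nat) : seq (seq nat) := comps_fuel k k.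

Section Zeta.
Variable R : realFieldType.

(* r is the coefficient of (T - a)^j in the Laurent expansion at T = a of the
   rational function u/w which agrees with f outside a finite set S.
   Writing Y = T - a, w(Y + a) = Y^n w1(Y) with w1(0) <> 0, u(Y+a)/w1(Y) =
   sum_i c_i Y^i, and the coefficient of Y^j of f is c_(j+n) (0 if j+n < 0);
   c_i is the i-th coefficient of any polynomial c with Y^(i+1) | u(Y+a) - w1 c. *)
Definition is_laurent_coef (f : R -> R) (a : R) (j : int) (r : R) : Prop :=
  exists (u w : {poly R}) (S : seq R),
    w != 0 /\ (forall T, T \notin S -> f T = u.[T] / w.[T]) /\
    exists (n : nat) (w1 : {poly R}),
      w \Po ('X + a%:P) = 'X^n * w1 /\ w1.[0] != 0 /\
      match (j + n%:Z)%R with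
      | Posz i => exists c : {poly R},
          dvdp 'X^(i.+1) ((u \Po ('X + a%:P)) - w1 * c) /\ r = c`_i
      | Negz _ => r = 0
      end.

Definition laurent_coef (f : R -> R) (a : R) (j : int) : R :=
  epsilon (inhabits 0) (is_laurent_coef f a j).

Definition residue1 (f : R -> R) : R := laurent_coef f 1 (-1).

(* q_{n} = q^{n_0 ... n_m}; for the empty tuple this is q *)
Definition qpow (q : nat) (ns : seq nat) : R := ((q ^ (\prod_(i <- ns) i))%N)%:R.

(* complete Artin zeta in T = q^{-s}:  q^{s(g-1)} P(T)/((1-T)(1-qT)) *)
Definition Zhat0 (q g : nat) (P : {poly R}) (T : R) : R :=
  T ^ (1 - g%:Z) * P.[T] / ((1 - T) * (1 - q%:R * T)).

Definition chain_weight (v : nat -> R) (Q : R) (ks : seq nat) : R :=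
  (\prod_(k <- ks) v k) / \prod_(pr <- zip ks (behead ks)) (1 - Q ^+ (pr.1 + pr.2)%N).

Definition zeta_at (f : R -> R) (Q : R) (k : nat) : R :=
  if k == 1%N then residue1 f else f (Q ^- k).

Definition vhat_of (f : R -> R) (Q : R) (N : nat) : R :=
  \prod_(1 <= k < N.+1) zeta_at f Q k.

(* Here T = T_{n_m} = Q^{-n s}, Q = q_{n_{m-1}}, so
   Q^{ns-n+a+k_p} = Q^{a+k_p-n} T^{-1},  Q^{-ns+n-a+1+l_1} = T Q^{n-a+1+l_1},
   and T_{n_{m-1}} at argument ns-n+a equals T Q^{n-a}. *)
Definition left_factor (v : nat -> R) (Q : R) (n a : nat) (T : R) : R :=
  \sum_(ks <- compositions (n - a)%N)
     chain_weight v Q ks *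
     (if ks is [::] then 1
      else (1 - Q ^ ((a + last 0%N ks)%N%:Z - n%:Z) * T^-1)^-1).

Definition right_factor (v : nat -> R) (Q : R) (n a : nat) (T : R) : R :=
  \sum_(ls <- compositions a.-1)
     (if ls is l1 :: _ then (1 - T * Q ^+ (n - a + 1 + l1)%N)^-1 else 1) *
     chain_weight v Q ls.

Definition derive_step (g : nat) (Q : R) (f : R -> R) (n : nat) (T : R) : R :=
  Q ^ ('C(n, 2)%:Z * (g%:Z - 1)) *
  \sum_(1 <= a < n.+1)
     (left_factor (vhat_of f Q) Q n a T * f (T * Q ^+ (n - a)) *
      right_factor (vhat_of f Q) Q n a T).

Fixpoint dzeta_rev (q g : nat) (P : {poly R}) (rns : seq nat) : R -> R :=
  match rns with
  | [::] => Zhat0 q g P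
  | n :: r => derive_step g (qpow q (rev r)) (dzeta_rev q g P r) n
  end.

Definition dzeta (q g : nat) (P : {poly R}) (ns : seq nat) : R -> R :=
  dzeta_rev q g P (rev ns).

Definition vhat (q g : nat) (P : {poly R}) (ns : seq nat) (N : nat) : R :=
  vhat_of (dzeta q g P ns) (qpow q ns) N.

End Zeta.

(* Write [F] for the derived zeta function of a tuple, as a function of [T], and [Q]
   for the corresponding [q_n].  By induction on the tuple, [F] is a rational function
   which satisfies the functional equation [F (1 / (Q T)) = F T], has all its poles at
   [T = 0] or in [[1/Q, 1]], and has at most a simple pole at [T = 1]; these properties
   pass from one level to the next.  At the next level [n = n_m], the summand of index
   [a < n] has a pole at [T = 1] only through the one-part composition [(n - a)] of its
   left factor, which contributes [v_(n-a) / (1 - 1/T)], while [F (T Q^(n-a))] and the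
   right factor are regular at [T = 1] by the location of their poles; the summand
   [a = n] inherits the pole of [F], whose residue is [v_1].  The functional equation
   gives [v_k F (Q^k) = v_(k+1)], so the residue of the [a]-th summand is [v_(n-a+1)]
   times the right factor at [T = 1], and taking [d = n - a + 1] as the first part of a
   composition of [n] turns the sum of these residues into the sum over compositions. *)

From HB Require Import structures.
From mathcomp Require Import all_boot all_order all_algebra.
From mathcomp Require Import zify ring.
From Stdlib Require Import ClassicalEpsilon.

Set Implicit Arguments.
Unset Strict Implicit.
Unset Printing Implicit Defensive.

Import Order.TTheory GRing.Theory Num.Theory.

Lemma comps_fuelSS fuel k : comps_fuel fuel.+1 k.+1 =
  [seq d :: c | d <- iota 1 k.+1, c <- comps_fuel fuel (k.+1 - d)].
Proof. by []. Qed.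

Lemma comps_fuel_enough f f' k : k <= f -> k <= f' -> comps_fuel f k = comps_fuel f' k.
Proof.
elim: f f' k => [|f IH] [|f'] [|k] // hk hk'; try lia.
rewrite !comps_fuelSS; congr flatten; apply/eq_in_map => d.
by rewrite mem_iota => /andP[d1 d2]; rewrite (IH f') //; lia.
Qed.

Lemma compositions0 : compositions 0 = [:: [::]].
Proof. by []. Qed.

Lemma compositionsS k : compositions k.+1 =
  [seq d :: c | d <- iota 1 k.+1, c <- compositions (k.+1 - d)].
Proof.
rewrite /compositions comps_fuelSS; congr flatten; apply/eq_in_map => d.
by rewrite mem_iota => /andP[d1 d2]; rewrite (@comps_fuel_enough _ (k.+1 - d)) //; lia.
Qed.

Definition is_composition k (c : seq nat) := all (fun x => 0 < x) c && (sumn c == k).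

Lemma mem_compositions k c : (c \in compositions k) = is_composition k c.
Proof.
elim/ltn_ind: k c => [[|k]] IH c.
  rewrite compositions0 inE /is_composition; case: c => //= x c.
  by apply/esym/negbTE; apply/negP => /andP[/andP[x0 _]]; lia.
rewrite compositionsS; apply/allpairsPdep/idP.
  move=> [d [c' [hd hc ->]]]; move: hd; rewrite mem_iota => /andP[d1 d2].
  move: hc; rewrite IH; last by lia.
  by rewrite /is_composition /= => /andP[-> /eqP ->]; rewrite d1 /=; apply/eqP; lia.
case: c => [|d c]; first by rewrite /is_composition.
rewrite /is_composition /= => /andP[/andP[d0 hc] /eqP hs].
exists d, c; split=> //; first by rewrite -/(iota 1 k.+1) mem_iota; lia.
by rewrite IH ?/is_composition ?hc /=; apply/eqP; lia.
Qed.

Lemma uniq_compositions k : uniq (compositions k).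
Proof.
elim/ltn_ind: k => [[|k]] IH //.
rewrite compositionsS; apply: allpairs_uniq_dep.
- exact: iota_uniq.
- by move=> d; rewrite mem_iota => /andP[d1 d2]; apply: IH; lia.
- by move=> [x1 y1] [x2 y2] _ _ /= [-> ->].
Qed.

Lemma big_compositions_rev (R : Type) (idx : R) (op : Monoid.com_law idx) k
    (F : seq nat -> R) :
  \big[op/idx]_(c <- compositions k) F c = \big[op/idx]_(c <- compositions k) F (rev c).
Proof.
rewrite -(big_map rev xpredT); apply: perm_big; apply: uniq_perm.
- exact: uniq_compositions.
- by rewrite map_inj_uniq ?uniq_compositions //; apply: (can_inj revK).
have comp_rev c : is_composition k (rev c) = is_composition k c.
  by rewrite /is_composition all_rev sumn_rev.
move=> c; rewrite mem_compositions; apply/esym/mapP.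
case: ifP => hc; last by move=> [c' hc' ec]; rewrite ec comp_rev -mem_compositions hc' in hc.
by exists (rev c); rewrite ?revK // mem_compositions comp_rev.
Qed.

Lemma is_composition_head k l s : is_composition k (l :: s) -> 0 < l <= k.
Proof. by rewrite /is_composition /= => /andP[/andP[-> _] /eqP <-]; lia. Qed.

Lemma is_composition_last k s : is_composition k s -> s != [::] ->
  0 < last 0 s <= k /\ (last 0 s = k -> s = [:: k]).
Proof.
case/lastP: s => [|s y] //; rewrite /is_composition all_rcons sumn_rcons last_rcons.
move=> /andP[/andP[y0 hs] /eqP hk] _; split; first lia.
by case: s hs hk => [|z s] /= => [_ <-|/andP[z0 _]]; rewrite ?addn0 //; lia.
Qed.

Fixpoint adjacent_sums (s : seq nat) : seq nat :=
  if s is x :: (y :: _) as s' then x + y :: adjacent_sums s' else [::].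

Lemma adjacent_sumsE s : [seq pr.1 + pr.2 | pr <- zip s (behead s)] = adjacent_sums s.
Proof. by elim: s => [|x [|y s] IH] //; move: IH; rewrite /= => ->. Qed.

Lemma adjacent_sums_rcons s y : adjacent_sums (rcons s y) =
  if s is [::] then [::] else rcons (adjacent_sums s) (last 0 s + y).
Proof. by elim: s => [|x [|z s] IH] //; move: IH; rewrite /= => ->. Qed.

Lemma adjacent_sums_rev s : adjacent_sums (rev s) = rev (adjacent_sums s).
Proof.
elim: s => [|x [|y s] IH] //.
rewrite rev_cons adjacent_sums_rcons IH.
case e: (rev (y :: s)) => [|z t]; first by move: (congr1 size e); rewrite size_rev.
by rewrite -e rev_cons last_rcons /= rev_cons addnC.
Qed.

Local Open Scope ring_scope.

Lemma poly_eq0_off (R : numDomainType) (S : seq R) (p : {poly R}) :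
  (forall x, x \notin S -> p.[x] = 0) -> p = 0.
Proof.
elim: S p => [|s S IH] p hp.
  apply: (@roots_geq_poly_eq0 _ _ [seq i%:R | i <- iota 0 (size p)]).
  - by apply/allP => _ /mapP[i _ ->]; apply/eqP/hp.
  - by rewrite map_inj_uniq ?iota_uniq //; apply/mulrIn/oner_neq0.
  - by rewrite size_map size_iota.
have /IH/eqP : forall x, x \notin S -> (p * ('X - s%:P)).[x] = 0.
  move=> x xS; rewrite hornerM hornerXsubC.
  have [->|xs] := eqVneq x s; first by rewrite subrr mulr0.
  by rewrite hp ?mul0r // inE negb_or xs.
by rewrite mulf_eq0 polyXsubC_eq0 orbF => /eqP.
Qed.

Section DivisibilityByXn.
Variable R : fieldType.
Implicit Types p w : {poly R}.

Lemma dvdXn_coef p k i : 'X^k %| p -> (i < k)%N -> p`_i = 0.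
Proof. by case/dvdpP => q ->; rewrite mulrC coefXnM => ->. Qed.

Lemma dvdXn_mulr k p w : w.[0] != 0 -> ('X^k %| p * w) = ('X^k %| p).
Proof.
move=> w0; rewrite Gauss_dvdpl //; apply: coprimep_expl.
by rewrite coprimep_sym -[X in coprimep _ X]subr0 -polyC0 coprimep_XsubC /root.
Qed.

End DivisibilityByXn.

Section RationalFunctions.
Variable R : fieldType.
Implicit Types (f h : R -> R) (E : R -> bool).

(* [f] is a rational function [u/w] with all its poles in [E]; it may differ
   from [u/w] at finitely many points of [E]. *)
Definition rat_off E f := exists (u w : {poly R}) (S : seq R),
  forall T, (T \notin S) || ~~ E T -> w.[T] != 0 /\ f T = u.[T] / w.[T].

Definition regular_at1 f := exists E, rat_off E f /\ ~~ E 1.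

Definition simple_pole1 f r := exists f1 f0 (S : seq R),
  [/\ regular_at1 f1, regular_at1 f0,
      forall T, T \notin S -> f T = f1 T / (T - 1) + f0 T & r = f1 1].

Lemma rat_off_sub E E' f : (forall T, E T -> E' T) -> rat_off E f -> rat_off E' f.
Proof.
move=> EE' [u [w [S H]]]; exists u, w, S => T hT; apply: H.
by case/orP: hT => [->//|h]; rewrite (contraNN (EE' T)) ?orbT.
Qed.

Lemma rat_off_ext E f f' : f =1 f' -> rat_off E f -> rat_off E f'.
Proof. by move=> e [u [w [S H]]]; exists u, w, S => T /H; rewrite e. Qed.

Lemma rat_off_cst E c : rat_off E (fun=> c).
Proof. by exists c%:P, 1, [::] => T _; rewrite !hornerE divr1 oner_neq0. Qed.

Lemma outside_cat (S1 S2 : seq R) E T : (T \notin S1 ++ S2) || ~~ E T ->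
  ((T \notin S1) || ~~ E T) /\ ((T \notin S2) || ~~ E T).
Proof. by rewrite mem_cat negb_or; case/orP => [/andP[-> ->]|->]; rewrite ?orbT. Qed.

Lemma rat_offD E f h : rat_off E f -> rat_off E h -> rat_off E (fun T => f T + h T).
Proof.
move=> [u1 [w1 [S1 H1]]] [u2 [w2 [S2 H2]]].
exists (u1 * w2 + u2 * w1), (w1 * w2), (S1 ++ S2).
move=> T /outside_cat[/H1[n1 ->] /H2[n2 ->]].
by rewrite hornerD !hornerM mulf_neq0 //; split=> //; field; apply/andP.
Qed.

Lemma rat_offM E f h : rat_off E f -> rat_off E h -> rat_off E (fun T => f T * h T).
Proof.
move=> [u1 [w1 [S1 H1]]] [u2 [w2 [S2 H2]]].
exists (u1 * u2), (w1 * w2), (S1 ++ S2).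
move=> T /outside_cat[/H1[n1 ->] /H2[n2 ->]].
by rewrite !hornerM mulf_neq0 //; split=> //; field; apply/andP.
Qed.

Lemma rat_off_sum (I : eqType) (s : seq I) (F : I -> R -> R) E :
  (forall i, i \in s -> rat_off E (F i)) -> rat_off E (fun T => \sum_(i <- s) F i T).
Proof.
elim: s => [|i s IH] H.
  by apply: rat_off_ext (rat_off_cst E 0) => T; rewrite big_nil.
apply: rat_off_ext (rat_offD (H i (mem_head _ _)) (IH _)) => [T|j hj].
  by rewrite big_cons.
by apply: H; rewrite inE hj orbT.
Qed.

Lemma rat_off_scale E f c : c != 0 ->
  rat_off E f -> rat_off (fun T => E (T * c)) (fun T => f (T * c)).
Proof.
move=> c0 [u [w [S H]]].
exists (u \Po (c%:P * 'X)), (w \Po (c%:P * 'X)), [seq x / c | x <- S] => T hT.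
rewrite !horner_comp !hornerE (mulrC c); apply: H.
case/orP: hT => [hT|->]; last by rewrite orbT.
by apply/orP; left; apply: contra hT => hT; apply/mapP; exists (T * c); rewrite ?mulfK.
Qed.

Lemma rat_off_inv1BV c : c != 0 ->
  rat_off (fun T => (T == 0) || (T == c)) (fun T => (1 - c * T^-1)^-1).
Proof.
move=> c0; exists 'X, ('X - c%:P), [:: 0; c] => T.
rewrite !inE negb_or orbb => /andP[T0 Tc].
by rewrite !hornerE subr_eq0 Tc; split=> //; field; rewrite subr_eq0 Tc T0.
Qed.

Lemma rat_off_inv1B d : rat_off (fun T => T * d == 1) (fun T => (1 - T * d)^-1).
Proof.
exists 1, (1 - d%:P * 'X), [:: d^-1] => T hT.
have Td : T * d != 1.
  case/orP: hT => [|//]; apply: contra => /eqP Td.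
  have d0 : d != 0 by apply: contra_eq_neq Td => ->; rewrite mulr0 eq_sym oner_neq0.
  by rewrite inE -[T](mulfK d0) Td div1r.
by rewrite !hornerE (mulrC d) subr_eq0 eq_sym Td.
Qed.

Lemma regular_at1_cst c : regular_at1 (fun=> c).
Proof. by exists (fun=> false); split; first exact: rat_off_cst. Qed.

Lemma regular_at1D f h : regular_at1 f -> regular_at1 h -> regular_at1 (fun T => f T + h T).
Proof.
move=> [E1 [h1 n1]] [E2 [h2 n2]]; exists (fun T => E1 T || E2 T).
split; last by rewrite negb_or n1 n2.
by apply: rat_offD; [apply: rat_off_sub h1|apply: rat_off_sub h2] => T ->; rewrite ?orbT.
Qed.

Lemma regular_at1M f h : regular_at1 f -> regular_at1 h -> regular_at1 (fun T => f T * h T).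
Proof.
move=> [E1 [h1 n1]] [E2 [h2 n2]]; exists (fun T => E1 T || E2 T).
split; last by rewrite negb_or n1 n2.
by apply: rat_offM; [apply: rat_off_sub h1|apply: rat_off_sub h2] => T ->; rewrite ?orbT.
Qed.

Lemma simple_pole1_ext f f' r : f =1 f' -> simple_pole1 f r -> simple_pole1 f' r.
Proof.
move=> e [f1 [f0 [S [h1 h0 hf hr]]]]; exists f1, f0, S; split=> // T hT.
by rewrite -e hf.
Qed.

Lemma simple_pole1_regular f : regular_at1 f -> simple_pole1 f 0.
Proof.
move=> hf; exists (fun=> 0), f, [::]; split=> //; first exact: regular_at1_cst.
by move=> T _; rewrite mul0r add0r.
Qed.

Lemma simple_pole1D f h r s :
  simple_pole1 f r -> simple_pole1 h s -> simple_pole1 (fun T => f T + h T) (r + s).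
Proof.
move=> [f1 [f0 [S [hf1 hf0 hf ->]]]] [h1 [h0 [S' [hh1 hh0 hh ->]]]].
exists (fun T => f1 T + h1 T), (fun T => f0 T + h0 T), (S ++ S').
split=> //; try exact: regular_at1D.
by move=> T; rewrite mem_cat negb_or => /andP[T1 T2]; rewrite hf // hh //; ring.
Qed.

Lemma simple_pole1Mr f h r :
  simple_pole1 f r -> regular_at1 h -> simple_pole1 (fun T => f T * h T) (r * h 1).
Proof.
move=> [f1 [f0 [S [hf1 hf0 hf ->]]]] hh.
exists (fun T => f1 T * h T), (fun T => f0 T * h T), S.
by split=> //; try exact: regular_at1M; move=> T hT; rewrite hf //; ring.
Qed.

Lemma simple_pole1Ml f h r :
  regular_at1 h -> simple_pole1 f r -> simple_pole1 (fun T => h T * f T) (h 1 * r).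
Proof.
move=> hh hf; rewrite mulrC.
by apply: simple_pole1_ext (simple_pole1Mr hf hh) => T; rewrite mulrC.
Qed.

Lemma simple_pole1_sum (I : eqType) (s : seq I) (F : I -> R -> R) (r : I -> R) :
  (forall i, i \in s -> simple_pole1 (F i) (r i)) ->
  simple_pole1 (fun T => \sum_(i <- s) F i T) (\sum_(i <- s) r i).
Proof.
elim: s => [|i s IH] H.
  rewrite big_nil; apply: simple_pole1_ext (simple_pole1_regular (regular_at1_cst 0)).
  by move=> T; rewrite big_nil.
rewrite big_cons; apply: simple_pole1_ext (simple_pole1D (H i (mem_head _ _)) (IH _)).
  by move=> T; rewrite big_cons.
by move=> j hj; apply: H; rewrite inE hj orbT.
Qed.

Lemma simple_pole1_inv1BV : simple_pole1 (fun T => (1 - T^-1)^-1) 1.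
Proof.
exists (fun=> 1), (fun=> 1), [:: 0; 1].
split=> //; try exact: regular_at1_cst.
by move=> T; rewrite !inE negb_or => /andP[T0 T1]; field; rewrite T0 subr_eq0 T1.
Qed.

End RationalFunctions.

Section Residue.
Variable R : realFieldType.

(* The normalised condition of [is_laurent_coef]: [r] is the coefficient of
   [X^j] in the Laurent series [U / (X^n w1)]. *)
Definition laurent_normal (U w1 : {poly R}) (n : nat) (j : int) (r : R) : Prop :=
  match (j + n%:Z)%R with
  | Posz i => exists c : {poly R}, 'X^(i.+1) %| U - w1 * c /\ r = c`_i
  | Negz _ => r = 0
  end.

Lemma laurent_normal_eq (U U' w1 w1' : {poly R}) (n n' : nat) j r r' :
  (n <= n')%N -> w1.[0] != 0 -> w1'.[0] != 0 ->
  U * ('X^n' * w1') = U' * ('X^n * w1) ->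
  laurent_normal U w1 n j r -> laurent_normal U' w1' n' j r' -> r = r'.
Proof.
move=> nn' w10 w10' E; rewrite /laurent_normal.
set d := (n' - n)%N.
have Xn0 : ('X^n : {poly R}) != 0 by rewrite expf_neq0 // polyX_eq0.
have {}E : U * 'X^d * w1' = U' * w1.
  apply: (mulfI Xn0); rewrite (_ : 'X^n * (U' * w1) = U' * ('X^n * w1)); last by ring.
  by rewrite -E (_ : n' = n + d)%N ?exprD; [ring | lia].
case E1: (j + n%:Z)%R => [i|i]; case E2: (j + n'%:Z)%R => [i'|i']; [|lia| |by move=> -> ->].
  move=> [c [hc ->]] [c' [hc' ->]].
  have ii : i' = (i + d)%N by lia.
  have key : (c' - 'X^d * c) * (w1 * w1') =
             w1' * ('X^d * (U - w1 * c)) - w1 * (U' - w1' * c').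
    apply/eqP; rewrite -subr_eq0; apply/eqP.
    by transitivity (U' * w1 - U * 'X^d * w1'); [ring | rewrite E subrr].
  (* [c'] and [X^d c] both approximate [U' / w1'] modulo [X^(i'+1)]. *)
  have : 'X^(i'.+1) %| (c' - 'X^d * c) * (w1 * w1').
    rewrite key; apply: dvdp_sub; apply: dvdp_mull => //.
    by rewrite ii -addSn addnC exprD dvdp_mul2l ?expf_neq0 ?polyX_eq0.
  rewrite dvdXn_mulr ?hornerM ?mulf_neq0 // => /dvdXn_coef/(_ (ltnSn i')).
  rewrite coefB coefXnM ii ltnNge leq_addl /= addnK => /eqP.
  by rewrite subr_eq0 => /eqP ->.
move=> -> [c' [hc' ->]].
(* Now [i' < d] and [X^d] divides [U'], hence also [c' w1'] modulo [X^(i'+1)]. *)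
have XdU' : 'X^d %| U' by rewrite -(dvdXn_mulr d U' w10) -E; apply/dvdp_mulr/dvdp_mull/dvdpp.
have XiU' : 'X^(i'.+1) %| U' by apply: dvdp_trans XdU'; rewrite dvdp_exp2l //; lia.
have : 'X^(i'.+1) %| c' * w1'.
  by rewrite (_ : c' * w1' = U' - (U' - w1' * c')); [apply: dvdp_sub | ring].
by rewrite dvdXn_mulr // => /dvdXn_coef ->.
Qed.

Lemma laurent_coef_unique (f : R -> R) a j r r' :
  is_laurent_coef f a j r -> is_laurent_coef f a j r' -> r = r'.
Proof.
move=> [u [w [S [w0 [hf [n [w1 [hw [w10 hr]]]]]]]]].
move=> [u' [w' [S' [w0' [hf' [n' [w1' [hw' [w10' hr']]]]]]]]].
have E0 : u * w' = u' * w.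
  apply/eqP; rewrite -subr_eq0; apply/eqP.
  have : (u * w' - u' * w) * (w * w') = 0.
    apply: (@poly_eq0_off _ (S ++ S')) => T; rewrite mem_cat negb_or => /andP[TS TS'].
    move: (hf T TS); rewrite hf' // !(hornerM, hornerD, hornerN).
    have [->|wT] := eqVneq w.[T] 0; first by rewrite !(mulr0, mul0r).
    have [->|wT'] := eqVneq w'.[T] 0; first by rewrite !(mulr0, mul0r).
    by move=> e; rewrite -[u.[T]](divfK wT) -e; field.
  by move/eqP; rewrite !mulf_eq0 (negbTE w0) (negbTE w0') !orbF => /eqP.
have E1 : (u \Po ('X + a%:P)) * ('X^n' * w1') = (u' \Po ('X + a%:P)) * ('X^n * w1).
  by rewrite -hw -hw' -!comp_polyM E0.
have [nn'|/ltnW n'n] := leqP n n'; first exact: laurent_normal_eq E1 hr hr'.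
by apply/esym; apply: laurent_normal_eq (esym E1) hr' hr.
Qed.

Lemma residue1_eq (f : R -> R) r : is_laurent_coef f 1 (-1) r -> residue1 f = r.
Proof.
move=> h; apply/esym/(laurent_coef_unique h).
by apply: epsilon_spec; exists r.
Qed.

Lemma simple_pole1_residue (f : R -> R) r : simple_pole1 f r -> residue1 f = r.
Proof.
move=> [f1 [f0 [S [[E1 [[u1 [w1 [S1 H1]]] n1]] [E0 [[u0 [w0 [S0 H0]]] n0]] hf ->]]]].
have [w11 e11] : w1.[1] != 0 /\ f1 1 = u1.[1] / w1.[1] by apply: H1; rewrite n1 orbT.
have [w01 _] : w0.[1] != 0 /\ f0 1 = u0.[1] / w0.[1] by apply: H0; rewrite n0 orbT.
have nz (p : {poly R}) : p.[1] != 0 -> p != 0 by apply: contraNneq => ->; rewrite horner0.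
have X1 : 'X - 1 != 0 :> {poly R} by rewrite -polyC1 polyXsubC_eq0.
have dvdX (p : {poly R}) : ('X %| p) = (p.[0] == 0).
  by have := dvdp_XsubCl p 0; rewrite polyC0 subr0.
apply: residue1_eq.
(* [f = (f1 + f0 (X - 1)) / (X - 1)] near [1], a Laurent expansion starting at degree [-1]. *)
exists (u1 * w0 + u0 * w1 * ('X - 1)), (w1 * w0 * ('X - 1)), (1 :: S ++ S1 ++ S0).
split; first by rewrite !mulf_neq0 // nz.
split.
  move=> T; rewrite inE !mem_cat !negb_or => /and4P[T1 TS TS1 TS0]; rewrite hf //.
  have [w1T ->] : w1.[T] != 0 /\ f1 T = u1.[T] / w1.[T] by apply: H1; rewrite TS1.
  have [w0T ->] : w0.[T] != 0 /\ f0 T = u0.[T] / w0.[T] by apply: H0; rewrite TS0.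
  by rewrite !(hornerE, hornerM, hornerD); field; rewrite w1T w0T subr_eq0 T1.
exists 1%N, ((w1 * w0) \Po ('X + 1%:P)); split.
  by rewrite comp_polyM comp_polyB comp_polyX comp_polyC addrK expr1 mulrC.
split; first by rewrite horner_comp !hornerE mulf_neq0.
exists (f1 1)%:P; split; last by rewrite coefC.
rewrite expr1 dvdX !(horner_comp, hornerE, hornerM, hornerD) e11; apply/eqP.
by field.
Qed.

End Residue.

Section DerivedZeta.
Variable R : realFieldType.

(* The point [T = 0] and the image [Q^-1 <= T <= 1] of the critical strip
   [0 <= Re s <= 1] under [T = Q^-s]. *)
Definition critical_strip (Q T : R) := (T == 0) || (Q^-1 <= T <= 1).

(* The functional equation [s <-> 1 - s] in the variable [T = Q^-s]. *)
Definition functional_eq (Q : R) (f : R -> R) := forall T, f ((Q * T)^-1) = f T.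

Lemma exprz_1Bn (T : R) (g : nat) : T != 0 -> T ^ (1 - g%:Z) = T / T ^+ g.
Proof. by move=> T0; rewrite expfzDr // exprnN expr1z. Qed.

Lemma chain_weight_cons (v : nat -> R) Q d c : chain_weight v Q (d :: c) =
  v d * ((if c is l :: _ then (1 - Q ^+ (d + l)%N)^-1 else 1) * chain_weight v Q c).
Proof.
rewrite /chain_weight; case: c => [|l c] /=; last by rewrite !big_cons invfM; ring.
by rewrite !big_cons !big_nil !(mulr1, mul1r, invr1).
Qed.

Lemma chain_weight_rev (v : nat -> R) Q ks : chain_weight v Q (rev ks) = chain_weight v Q ks.
Proof.
have E s : \prod_(pr <- zip s (behead s)) (1 - Q ^+ (pr.1 + pr.2)%N) =
    \prod_(k <- adjacent_sums s) (1 - Q ^+ k) by rewrite -adjacent_sumsE big_map.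
by rewrite /chain_weight big_rev !E adjacent_sums_rev big_rev.
Qed.

Section BaseLevel.
Variables (q g : nat) (P : {poly R}).
Hypothesis q_gt1 : (1 < q)%N.
Hypothesis P_FE : forall T : R, T != 0 ->
  P.[T] = q%:R ^+ g * T ^+ (2 * g) * P.[(q%:R * T)^-1].

Let q_neq0 : q%:R != 0 :> R. Proof. by rewrite pnatr_eq0 -lt0n ltnW. Qed.

Let qT_neq1 (T : R) : T != q%:R^-1 -> q%:R * T != 1.
Proof. by apply: contra => /eqP qT; rewrite -[T](mulKf q_neq0) qT mulr1. Qed.

Lemma Zhat0_FE : functional_eq q%:R (Zhat0 q g P).
Proof.
move=> T; rewrite /Zhat0.
have [->|T0] := eqVneq T 0; first by rewrite !mulr0 invr0 !mulr0.
have qT0 : (q%:R * T)^-1 != 0 by rewrite invr_eq0 mulf_neq0.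
rewrite !exprz_1Bn //.
have [->|T1] := eqVneq T 1; first by rewrite mulr1 mulfV // !(subrr, mulr0, mul0r, invr0).
have [qT1|qT1] := eqVneq (q%:R * T) 1; first by rewrite qT1 invr1 !(subrr, mulr0, mul0r, invr0).
rewrite (P_FE T0) exprVn exprMn mulnC exprM.
have Tg0 : T ^+ g != 0 by rewrite expf_neq0.
have qg0 : q%:R ^+ g != 0 :> R by rewrite expf_neq0.
by field; rewrite Tg0 qg0 q_neq0 T0 !subr_eq0 !(eq_sym 1) T1 qT1.
Qed.

Let critical_strip_q T : [|| T == 0, T == 1 | T == q%:R^-1] -> critical_strip q%:R T.
Proof.
have q_ge1 := ltnW q_gt1.
have q_inv_le1 : q%:R^-1 <= 1 :> R by rewrite invf_le1 ?ler1n ?ltr0n.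
by case/or3P => /eqP ->; rewrite /critical_strip ?eqxx ?lexx ?q_inv_le1 ?orbT.
Qed.

Lemma rat_off_Zhat0 : rat_off (critical_strip q%:R) (Zhat0 q g P).
Proof.
apply: rat_off_sub critical_strip_q _.
exists ('X * P), ('X^g * ((1 - 'X) * (1 - q%:R%:P * 'X))), [:: 0; 1; q%:R^-1] => T.
rewrite !inE orbb !negb_or => /and3P[T0 T1 Tq].
have qT1 : 1 - q%:R * T != 0 by rewrite subr_eq0 eq_sym qT_neq1.
rewrite /Zhat0 !(hornerCM, hornerM, hornerD, hornerN, hornerXn, hornerX, hornerC).
rewrite exprz_1Bn //; split.
  by rewrite !mulf_neq0 ?expf_neq0 // subr_eq0 eq_sym.
by field; rewrite qT1 subr_eq0 eq_sym T1 expf_neq0.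
Qed.

Lemma simple_pole1_Zhat0 : simple_pole1 (Zhat0 q g P) (P.[1] / (q%:R - 1)).
Proof.
pose f1 T := T ^ (1 - g%:Z) * P.[T] / (q%:R * T - 1).
have q1 : q%:R - 1 != 0 :> R by rewrite subr_eq0 pnatr_eq1 gtn_eqF.
exists f1, (fun=> 0), [:: 1; q%:R^-1]; split.
- exists (fun T => (T == 0) || (T == q%:R^-1)); split; last first.
    by rewrite negb_or oner_neq0 eq_sym invr_eq1 pnatr_eq1 gtn_eqF.
  exists ('X * P), ('X^g * (q%:R%:P * 'X - 1)), [:: 0; q%:R^-1] => T.
  rewrite !inE orbb !negb_or => /andP[T0 Tq].
  have qT1 : q%:R * T - 1 != 0 by rewrite subr_eq0 qT_neq1.
  rewrite /f1 !(hornerCM, hornerM, hornerD, hornerN, hornerXn, hornerX, hornerC).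
  rewrite exprz_1Bn //; split; first by rewrite mulf_neq0 ?expf_neq0.
  by field; rewrite qT1 expf_neq0.
- exact: regular_at1_cst.
- move=> T; rewrite !inE negb_or => /andP[T1 Tq].
  have qT1 : q%:R * T - 1 != 0 by rewrite subr_eq0 qT_neq1.
  rewrite /Zhat0 /f1 addr0; field.
  by rewrite qT1 !subr_eq0 !(eq_sym 1) T1 qT_neq1.
- by rewrite /f1 exp1rz mul1r mulr1.
Qed.

End BaseLevel.

Section Step.
Variables (g : nat) (Q : R) (f : R -> R) (n : nat) (r0 : R).
Hypotheses (Q_gt1 : 1 < Q) (n_gt0 : (0 < n)%N) (f_FE : functional_eq Q f)
  (f_rat : rat_off (critical_strip Q) f) (f_pole : simple_pole1 f r0).
Local Notation v := (vhat_of f Q).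

Let Q_gt0 : 0 < Q. Proof. exact: lt_trans ltr01 Q_gt1. Qed.
Let Q_neq0 : Q != 0. Proof. exact: lt0r_neq0 Q_gt0. Qed.
Let QX_gt0 k : 0 < Q ^+ k. Proof. exact: exprn_gt0 Q_gt0. Qed.
Let QX_neq0 k : Q ^+ k != 0. Proof. exact: lt0r_neq0 (QX_gt0 k). Qed.

Let invQX_le m k : (m <= k)%N -> (Q ^+ k)^-1 <= (Q ^+ m)^-1.
Proof. by move=> mk; rewrite lef_pV2 ?posrE // ler_eXn2l. Qed.

Let invQX_le1 k : (Q ^+ k)^-1 <= 1.
Proof. by rewrite -[leRHS]invr1 -(expr0 Q) invQX_le. Qed.

Let invQX_leV k : (0 < k)%N -> (Q ^+ k)^-1 <= Q^-1.
Proof. by rewrite -[X in _ <= X^-1]expr1; apply: invQX_le. Qed.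

Definition inner_strip T := (T == 0) || ((Q ^+ n)^-1 <= T <= Q^-1).

Lemma inner_strip_sub T : inner_strip T -> critical_strip (Q ^+ n) T.
Proof.
rewrite /critical_strip; case/orP=> [->//|/andP[-> TQ]].
by rewrite (le_trans TQ) ?orbT // invf_le1 ?ltW.
Qed.

Lemma rat_off_inner h : rat_off inner_strip h ->
  rat_off (critical_strip (Q ^+ n)) h /\ regular_at1 h.
Proof.
move=> hh; split; first exact: rat_off_sub inner_strip_sub hh.
exists inner_strip; split=> //; rewrite /inner_strip negb_or oner_neq0 negb_and.
by apply/orP; right; rewrite -ltNge invf_lt1.
Qed.

(* Reversing compositions exchanges the two factors. *)
Lemma left_factorV a T : (1 <= a <= n)%N ->
  left_factor v Q n a ((Q ^+ n * T)^-1) = right_factor v Q n (n.+1 - a) T.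
Proof.
move=> ha; rewrite /left_factor /right_factor (_ : (n.+1 - a).-1 = n - a)%N; last by lia.
rewrite [RHS]big_compositions_rev; apply: eq_big_seq => ks _.
rewrite chain_weight_rev mulrC; congr (_ * _).
case/lastP: ks => [|s y] //; rewrite last_rcons rev_rcons invrK.
rewrite (_ : n - (n.+1 - a) + 1 + y = a + y)%N; last by lia.
case: s => [|z s] /=; congr (_^-1); congr (1 - _);
  by rewrite mulrA exprnP -expfzDr // subrK -exprnP mulrC.
Qed.

(* [T -> (Q^n T)^-1] exchanges the summands [a] and [n + 1 - a]. *)
Lemma derive_step_FE : functional_eq (Q ^+ n) (derive_step g Q f n).
Proof.
move=> T; rewrite /derive_step; congr (_ * _).
rewrite [RHS]big_nat_rev; apply: eq_big_nat => a /andP[a1 a2].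
rewrite (_ : 1 + n.+1 - a.+1 = n.+1 - a)%N; last by lia.
set b := (n.+1 - a)%N.
have hb : (1 <= b <= n)%N by rewrite /b; lia.
have ha : (1 <= a <= n)%N by lia.
rewrite (left_factorV _ ha).
have -> : right_factor v Q n a ((Q ^+ n * T)^-1) = left_factor v Q n b T.
  have := left_factorV ((Q ^+ n * T)^-1) hb.
  by rewrite invfM invrK mulKf // (_ : n.+1 - b = a)%N //; rewrite /b; lia.
have -> : (Q ^+ n * T)^-1 * Q ^+ (n - a) = (Q * (T * Q ^+ (n - b)))^-1.
  have [->|T0] := eqVneq T 0; first by rewrite !(mulr0, mul0r, invr0).
  have -> : Q ^+ n = Q ^+ (n - a) * (Q * Q ^+ (n - b)).
    by rewrite -exprS -exprD; congr (Q ^+ _); rewrite /b; lia.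
  by field; rewrite T0 Q_neq0 !QX_neq0.
by rewrite f_FE; ring.
Qed.

Definition left_term a ks T := chain_weight v Q ks *
  (if ks is [::] then 1 else (1 - Q ^ ((a + last 0%N ks)%N%:Z - n%:Z) * T^-1)^-1).

Lemma left_term_pole a : (a <= n)%N ->
  (fun T => v (n - a) * (1 - T^-1)^-1) =1 left_term a [:: (n - a)%N].
Proof.
move=> an T; rewrite /left_term /chain_weight /= big_seq1 big_nil invr1 mulr1.
by rewrite (_ : ((a + (n - a))%N%:Z - n%:Z)%R = 0) ?expr0z ?mul1r //; lia.
Qed.

Lemma left_term_regular a ks : (1 <= a <= n)%N -> ks \in compositions (n - a) ->
  ks != [:: (n - a)%N] -> rat_off inner_strip (left_term a ks).
Proof.
move=> ha; rewrite mem_compositions; case: ks => [|x s] hks hne.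
  by rewrite /left_term /=; apply: rat_off_cst.
have [/andP[y0 yna] ylast] := is_composition_last hks isT.
set y := last 0%N (x :: s) in y0 yna ylast *.
set m := (n - a - y)%N.
have m0 : (0 < m)%N by rewrite lt0n; apply: contra hne => /eqP m0; apply/eqP/ylast; lia.
apply: (rat_off_ext (f := fun T => chain_weight v Q (x :: s) * (1 - Q ^- m * T^-1)^-1)).
  by move=> T; rewrite /left_term -/y (_ : ((a + y)%N%:Z - n%:Z)%R = - m%:Z) -?exprnN //; lia.
apply: rat_offM; first exact: rat_off_cst.
apply: rat_off_sub (rat_off_inv1BV (invr_neq0 (QX_neq0 m))) => T /orP[]/eqP ->.
  by rewrite /inner_strip eqxx.
by rewrite /inner_strip invQX_le ?invQX_leV ?orbT //; lia.
Qed.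

Lemma rat_off_left_factor a : (1 <= a <= n)%N ->
  rat_off (critical_strip (Q ^+ n)) (left_factor v Q n a).
Proof.
move=> ha; apply: rat_off_sum => ks hks.
have [->|hne] := eqVneq ks [:: (n - a)%N]; last first.
  exact: rat_off_sub inner_strip_sub (left_term_regular ha hks hne).
apply: rat_off_ext (left_term_pole _) _; first by lia.
apply: rat_offM; first exact: rat_off_cst.
apply: (rat_off_ext (f := fun T => (1 - 1 * T^-1)^-1)) => [T|]; first by rewrite mul1r.
apply: rat_off_sub (rat_off_inv1BV (oner_neq0 R)) => T /orP[]/eqP ->.
  by rewrite /critical_strip eqxx.
by rewrite /critical_strip lexx invQX_le1 orbT.
Qed.

Lemma simple_pole1_left_factor a : (1 <= a < n)%N ->
  simple_pole1 (left_factor v Q n a) (v (n - a)).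
Proof.
move=> ha; have ha' : (1 <= a <= n)%N by lia.
have pole ks : ks \in compositions (n - a) ->
    simple_pole1 (left_term a ks) (if ks == [:: (n - a)%N] then v (n - a) else 0).
  move=> hks; have [->|hne] := eqVneq ks [:: (n - a)%N]; last first.
    exact/simple_pole1_regular/(rat_off_inner (left_term_regular ha' hks hne)).2.
  rewrite -[v _]mulr1; apply: simple_pole1_ext (left_term_pole _) _; first by lia.
  exact: simple_pole1Ml (regular_at1_cst _) (simple_pole1_inv1BV R).
have comp : [:: (n - a)%N] \in compositions (n - a).
  by rewrite mem_compositions /is_composition /= addn0 eqxx andbT; lia.
have := simple_pole1_sum pole.
rewrite (bigD1_seq _ comp (uniq_compositions _)) /= eqxx big1 ?addr0 //.
by move=> ks /negbTE ->.
Qed.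

Lemma left_factor_nn T : left_factor v Q n n T = 1.
Proof.
rewrite /left_factor subnn compositions0 big_seq1 /chain_weight !big_nil /=.
by rewrite invr1 !mulr1.
Qed.

Lemma rat_off_right_factor a : (1 <= a <= n)%N -> rat_off inner_strip (right_factor v Q n a).
Proof.
move=> ha; apply: rat_off_sum => -[|l s]; first by move=> _; exact: rat_off_cst.
rewrite mem_compositions => /is_composition_head hl.
set m := (n - a + 1 + l)%N.
apply: rat_offM; last exact: rat_off_cst.
apply: rat_off_sub (rat_off_inv1B (Q ^+ m)) => T /eqP e.
rewrite -[T](mulfK (QX_neq0 m)) e div1r.
by rewrite /inner_strip invQX_le ?invQX_leV ?orbT //; rewrite /m; lia.
Qed.

Lemma rat_off_shift k : (k < n)%N -> rat_off
  (fun T => (T == 0) || ((Q ^+ n)^-1 <= T <= (Q ^+ k)^-1)) (fun T => f (T * Q ^+ k)).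
Proof.
move=> kn; apply: rat_off_sub (rat_off_scale (QX_neq0 k) f_rat) => T.
rewrite /critical_strip mulf_eq0 (negbTE (QX_neq0 k)) orbF => /orP[->//|/andP[lo hi]].
have hiT : T <= (Q ^+ k)^-1 by rewrite -(ler_pM2r (QX_gt0 k)) mulVf.
have loT : (Q ^+ k.+1)^-1 <= T by rewrite -(ler_pM2r (QX_gt0 k)) exprS invfM mulfVK.
by rewrite hiT (le_trans (invQX_le kn) loT) orbT.
Qed.

Definition step_term a T :=
  left_factor v Q n a T * f (T * Q ^+ (n - a)) * right_factor v Q n a T.

Lemma rat_off_step_term a : (1 <= a <= n)%N -> rat_off (critical_strip (Q ^+ n)) (step_term a).
Proof.
move=> ha; apply: rat_offM; first apply: rat_offM.
- exact: rat_off_left_factor.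
- apply: rat_off_sub (rat_off_shift _) => [T|]; last by lia.
  rewrite /critical_strip; case/orP=> [->//|/andP[-> hi]].
  by rewrite (le_trans hi) ?invQX_le1 ?orbT.
- exact: (rat_off_inner (rat_off_right_factor ha)).1.
Qed.

Lemma vhat_of1 : v 1 = r0.
Proof. by rewrite /vhat_of big_nat1 /zeta_at eqxx (simple_pole1_residue f_pole). Qed.

(* The functional equation turns the value at [Q^-k.+1] into the value at [Q^k]. *)
Lemma vhat_ofS k : (0 < k)%N -> v k * f (Q ^+ k) = v k.+1.
Proof.
move=> k0; rewrite /vhat_of [in RHS]big_nat_recr //= /zeta_at.
rewrite (_ : (k.+1 == 1)%N = false); last by apply/negbTE; lia.
by rewrite -f_FE -exprS.
Qed.

Lemma simple_pole1_step_term a : (1 <= a <= n)%N ->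
  simple_pole1 (step_term a) (v (n - a).+1 * right_factor v Q n a 1).
Proof.
move=> ha; have hR := (rat_off_inner (rat_off_right_factor ha)).2.
have [an|an] : (1 <= a < n)%N \/ a = n by lia.
  have hf : regular_at1 (fun T => f (T * Q ^+ (n - a))).
    apply: (rat_off_inner _).2; apply: rat_off_sub (rat_off_shift _) => [T|]; last by lia.
    rewrite /inner_strip; case/orP=> [->//|/andP[-> hi]].
    by rewrite (le_trans hi) ?invQX_leV ?orbT //; lia.
  have := simple_pole1Mr (simple_pole1Mr (simple_pole1_left_factor an) hf) hR.
  by rewrite /= mul1r vhat_ofS //; lia.
subst a; rewrite subnn vhat_of1 -[r0]mul1r.
apply: simple_pole1_ext (simple_pole1Mr (simple_pole1Ml (regular_at1_cst (1 : R)) f_pole) hR) => T.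
by rewrite /step_term left_factor_nn subnn expr0 mulr1.
Qed.

Lemma rat_off_derive_step : rat_off (critical_strip (Q ^+ n)) (derive_step g Q f n).
Proof.
apply: rat_offM; first exact: rat_off_cst.
apply: rat_off_sum => a.
by rewrite mem_index_iota => ha; apply: rat_off_step_term; lia.
Qed.

Lemma sum_step_residues :
  \sum_(1 <= a < n.+1) v (n - a).+1 * right_factor v Q n a 1 =
  \sum_(ds <- compositions n) chain_weight v Q ds.
Proof.
case: n n_gt0 => [//|n'] _.
rewrite compositionsS big_allpairs_dep -(_ : index_iota 1 n'.+2 = iota 1 n'.+1) //.
rewrite [LHS]big_nat_rev; apply: eq_big_nat => d hd.
rewrite (_ : (n'.+1 - (1 + n'.+2 - d.+1)).+1 = d)%N; last by lia.
rewrite /right_factor (_ : (1 + n'.+2 - d.+1).-1 = n'.+1 - d)%N; last by lia.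
rewrite big_distrr; apply: eq_bigr => -[|l c] _; rewrite [in RHS]chain_weight_cons //=.
by rewrite mul1r (_ : n'.+1 - (1 + n'.+2 - d.+1) + 1 + l = d + l)%N //; lia.
Qed.

Lemma simple_pole1_derive_step : simple_pole1 (derive_step g Q f n)
  (Q ^ ('C(n, 2)%:Z * (g%:Z - 1)) * \sum_(ds <- compositions n) chain_weight v Q ds).
Proof.
rewrite -sum_step_residues; apply: simple_pole1Ml (regular_at1_cst _) _.
apply: simple_pole1_sum => a; rewrite mem_index_iota => ha.
by apply: simple_pole1_step_term; lia.
Qed.

End Step.

Lemma qpow_nil (q : nat) : qpow R q [::] = q%:R.
Proof. by rewrite /qpow big_nil expn1. Qed.

Lemma qpow_rcons (q : nat) ns n : qpow R q (rcons ns n) = qpow R q ns ^+ n.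
Proof. by rewrite /qpow big_rcons /= expnM natrX. Qed.

Lemma qpow_gt1 (q : nat) ns : (1 < q)%N -> all (fun x => 0 < x)%N ns -> 1 < qpow R q ns.
Proof.
move=> q_gt1 ns_pos; rewrite /qpow ltr1n -[X in (X < _)%N](expn0 q) ltn_exp2l //.
by rewrite big_seq prodn_cond_gt0 // => i /(allP ns_pos).
Qed.

Lemma dzeta_rcons (q g : nat) P ns n :
  dzeta q g P (rcons ns n) = derive_step g (qpow R q ns) (dzeta q g P ns) n.
Proof. by rewrite /dzeta rev_rcons /= revK. Qed.

Lemma dzeta_invariants (q g : nat) (P : {poly R}) ns : (1 < q)%N ->
  (forall T : R, T != 0 -> P.[T] = q%:R ^+ g * T ^+ (2 * g) * P.[(q%:R * T)^-1]) ->
  all (fun x => 0 < x)%N ns ->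
  [/\ functional_eq (qpow R q ns) (dzeta q g P ns),
      rat_off (critical_strip (qpow R q ns)) (dzeta q g P ns)
    & exists r, simple_pole1 (dzeta q g P ns) r].
Proof.
move=> q_gt1 P_FE; elim/last_ind: ns => [|ns n IH].
  rewrite qpow_nil; split; [exact: Zhat0_FE | exact: rat_off_Zhat0 |].
  by eexists; apply: simple_pole1_Zhat0.
rewrite all_rcons => /andP[n_gt0 ns_pos].
have [fFE frat [r fpole]] := IH ns_pos.
have Q_gt1 := qpow_gt1 q_gt1 ns_pos.
rewrite dzeta_rcons qpow_rcons; split.
- exact: derive_step_FE.
- exact: rat_off_derive_step.
- by eexists; apply: (simple_pole1_derive_step g Q_gt1 n_gt0 fFE frat fpole).
Qed.

End DerivedZeta.

Theorem theorem2p6 (R : realFieldType) (p k q g : nat) (P : {poly R})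
    (ns : seq nat) (n : nat) :
  prime p -> (0 < k)%N -> q = (p ^ k)%N ->
  size P = (2 * g).+1 -> P.[0] = 1 ->
  (forall T : R, T != 0 ->
     P.[T] = (q%:R) ^+ g * T ^+ (2 * g) * P.[(q%:R * T)^-1]) ->
  all (fun x => (0 < x)%N) (rcons ns n) ->
  residue1 (dzeta q g P (rcons ns n)) =
  qpow R q ns ^ ('C(n, 2)%:Z * (g%:Z - 1)) *
  \sum_(ds <- compositions n) chain_weight (vhat q g P ns) (qpow R q ns) ds.
Proof.
move=> p_prime k_gt0 q_eq _ _ P_FE; rewrite all_rcons => /andP[n_gt0 ns_pos].
have q_gt1 : (1 < q)%N by rewrite q_eq -(expn0 p) ltn_exp2l // prime_gt1.
have [fFE frat [r fpole]] := dzeta_invariants q_gt1 P_FE ns_pos.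
have := simple_pole1_derive_step g (qpow_gt1 R q_gt1 ns_pos) n_gt0 fFE frat fpole.
by rewrite dzeta_rcons => /simple_pole1_residue.
Qed.
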